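(* Let $\mathcal{F}$ be a scaling-closed set of length spaces or $\mathbb{R}_{>0}$-weighted graphs. 1. If $f,g:\mathbb{N}\times\mathbb{R}\to\mathbb{R}$ are functions such that every member of $\mathcal{F}$ has the weak coarse Menger property with witness $(f(k,r),g(k,r))$, then every length space in $\mathcal{F}$ has the weak coarse Menger property with witness $(f(k,1),g(k,1)\cdot r)$. 2. If $f,g:\mathbb{N}\times\mathbb{R}\to\mathbb{R}$ are functions such that every member of $\mathcal{F}$ has the weak coarse Gallai property with witness $(f(k,r),g(k,r))$, then every length space in $\mathcal{F}$ has the weak coarse Gallai property with witness $(f(k,1),g(k,1)\cdot r)$. 3. If $f,g:\mathbb{N}\times\mathbb{R}_{>0}\times\mathbb{R}_{\ge0}\to\mathbb{R}$ are functions such that every member of $\mathcal{F}$ has the remote weak coarse Menger property with witness $(f(k,r,\ell),g(k,r,\ell))$, then every length space in $\mathcal{F}$ has the remote weak coarse Menger property with witness $(f(k,1,\frac{\ell}{r}),\,g(k,1,\frac{\ell}{r})\cdot r)$.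
   Context: A set $\mathcal{F}$ of metric spaces is scaling-closed if $(X,r\cdot d_X)\in\mathcal{F}$ for every $(X,d_X)\in\mathcal{F}$ and real $r>0$. A length space is a metric space in which any two points are joined by paths (rectifiable curves) of length arbitrarily close to their distance. An $\mathbb{R}_{>0}$-weighted graph is a graph with positive edge weights, viewed as the metric space on its vertices with distance the infimum total weight of a path; its paths are graph paths. A set is $(\alpha,\beta)$-centered if it lies in a union of at most $\alpha$ balls of radius at most $\beta$; distance between paths is the infimum of distances between their points. Paths from $A$ to $B$ start in $A$ and end in $B$; an $(\ell,A,B)$-path is a path from $a\in A$ to $b\in B$ with $d(a,b)\ge\ell$; an $A$-path joins two distinct points of $A$. A space has the weak coarse Menger property with witness $(f,g)$ if for all $k\in\mathbb{N}$, $r>0$, subsets $A,B$, either there are $k$ paths from $A$ to $B$ pairwise at distance at least $r$, or some $(f(k,r),g(k,r))$-centered set meets every path from $A$ to $B$; the weak coarse Gallai property with witness $(f,g)$ is the same with $A$-paths; the remote weak coarse Menger property with witness $(f,g)$ means for all $k$, $r>0$, $\ell\ge0$, $A,B$, either there are $k$ $(\ell,A,B)$-paths pairwise at distance at least $r$ or some $(f(k,r,\ell),g(k,r,\ell))$-centered set meets every $(\ell,A,B)$-path. *)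

From Stdlib Require Import Reals Lra List.
Open Scope R_scope.

Record space := Space { pt : Type; dist : pt -> pt -> R }.

Definition is_metric (X : space) : Prop :=
  (forall x y : pt X, 0 <= dist X x y) /\
  (forall x : pt X, dist X x x = 0) /\
  (forall x y : pt X, dist X x y = 0 -> x = y) /\
  (forall x y : pt X, dist X x y = dist X y x) /\
  (forall x y z : pt X, dist X x z <= dist X x y + dist X y z).

Definition scale_space (r : R) (X : space) : space :=
  Space (pt X) (fun x y => r * dist X x y).

Definition curve (X : space) (gamma : R -> pt X) : Prop :=
  forall t, 0 <= t <= 1 -> forall eps, 0 < eps ->
    exists delta, 0 < delta /\
      forall s, 0 <= s <= 1 -> Rabs (s - t) < delta ->
        dist X (gamma s) (gamma t) < eps.

Definition partition (t : nat -> R) (n : nat) : Prop :=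
  t 0%nat = 0 /\ t n = 1 /\ (forall i, (i < n)%nat -> t i <= t (S i)).

Fixpoint chord_sum (X : space) (gamma : R -> pt X) (t : nat -> R) (n : nat) : R :=
  match n with
  | O => 0
  | S m => chord_sum X gamma t m + dist X (gamma (t m)) (gamma (t (S m)))
  end.

Definition length_le (X : space) (gamma : R -> pt X) (L : R) : Prop :=
  forall t n, partition t n -> chord_sum X gamma t n <= L.

Definition rectifiable (X : space) (gamma : R -> pt X) : Prop :=
  exists L, length_le X gamma L.

Definition length_space (X : space) : Prop :=
  is_metric X /\
  forall x y : pt X, forall eps, 0 < eps ->
    exists gamma, curve X gamma /\ gamma 0 = x /\ gamma 1 = y /\
      length_le X gamma (dist X x y + eps).

Record gstruct (V : Type) := GStruct { adj : V -> V -> Prop; wt : V -> V -> R }.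
Arguments adj {V}.
Arguments wt {V}.

(* x :: l is a walk *)
Fixpoint walk {V : Type} (G : gstruct V) (x : V) (l : list V) : Prop :=
  match l with
  | nil => True
  | y :: l' => adj G x y /\ walk G y l'
  end.

Fixpoint walk_weight {V : Type} (G : gstruct V) (x : V) (l : list V) : R :=
  match l with
  | nil => 0
  | y :: l' => wt G x y + walk_weight G y l'
  end.

(* X is the vertex set of the R_{>0}-weighted graph G, with
   distance the infimum total weight of a walk *)
Definition wgraph (X : space) (G : gstruct (pt X)) : Prop :=
  is_metric X /\
  (forall x y, adj G x y -> adj G y x /\ wt G x y = wt G y x /\ 0 < wt G x y) /\
  (forall x y l, walk G x l -> last l x = y -> dist X x y <= walk_weight G x l) /\
  (forall x y eps, 0 < eps -> exists l, walk G x l /\ last l x = y /\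
       walk_weight G x l < dist X x y + eps).

Inductive member :=
  | LenSp (X : space)
  | WGraph (X : space) (G : gstruct (pt X)).

Definition mspace (m : member) : space :=
  match m with LenSp X => X | WGraph X _ => X end.

Definition valid_member (m : member) : Prop :=
  match m with
  | LenSp X => length_space X
  | WGraph X G => wgraph X G
  end.

Definition scale_member (r : R) (m : member) : member :=
  match m with
  | LenSp X => LenSp (scale_space r X)
  | WGraph X G =>
      WGraph (scale_space r X)
             (GStruct (pt X) (adj G) (fun x y => r * wt G x y))
  end.

Definition scaling_closed (F : member -> Prop) : Prop :=
  forall m r, F m -> 0 < r -> F (scale_member r m).

(* P is (the point set of) a path from a to b in m *)
Definition is_path (m : member) : pt (mspace m) -> pt (mspace m) -> (pt (mspace m) -> Prop) -> Prop :=
  match m return pt (mspace m) -> pt (mspace m) -> (pt (mspace m) -> Prop) -> Prop with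
  | LenSp X => fun a b P =>
      exists gamma, curve X gamma /\ rectifiable X gamma /\
        gamma 0 = a /\ gamma 1 = b /\
        (forall x, P x <-> exists t, 0 <= t <= 1 /\ gamma t = x)
  | WGraph X G => fun a b P =>
      exists l, walk G a l /\ last l a = b /\ NoDup (a :: l) /\
        (forall x, P x <-> In x (a :: l))
  end.

Definition centered (X : space) (alpha beta : R) (Z : pt X -> Prop) : Prop :=
  exists (n : nat) (c : nat -> pt X) (rad : nat -> R),
    INR n <= alpha /\ (forall i, (i < n)%nat -> rad i <= beta) /\
    forall z, Z z -> exists i, (i < n)%nat /\ dist X (c i) z <= rad i.

Definition dist_ge (X : space) (P Q : pt X -> Prop) (r : R) : Prop :=
  forall x y, P x -> Q y -> r <= dist X x y.

Definition AB_path (m : member) (A B : pt (mspace m) -> Prop) (P : pt (mspace m) -> Prop) : Prop :=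
  exists a b, A a /\ B b /\ is_path m a b P.

Definition A_path (m : member) (A : pt (mspace m) -> Prop) (P : pt (mspace m) -> Prop) : Prop :=
  exists a b, A a /\ A b /\ a <> b /\ is_path m a b P.

Definition lAB_path (m : member) (l : R) (A B : pt (mspace m) -> Prop) (P : pt (mspace m) -> Prop) : Prop :=
  exists a b, A a /\ B b /\ l <= dist (mspace m) a b /\ is_path m a b P.

Definition menger_alt (m : member) (cls : (pt (mspace m) -> Prop) -> Prop)
    (k : nat) (r alpha beta : R) : Prop :=
  (exists P : nat -> pt (mspace m) -> Prop,
     (forall i, (i < k)%nat -> cls (P i)) /\
     (forall i j, (i < k)%nat -> (j < k)%nat -> i <> j -> dist_ge (mspace m) (P i) (P j) r))
  \/
  (exists Z, centered (mspace m) alpha beta Z /\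
     forall Q, cls Q -> exists z, Z z /\ Q z).

Definition weak_coarse_menger (m : member) (f g : nat -> R -> R) : Prop :=
  forall (k : nat) (r : R) (A B : pt (mspace m) -> Prop), 0 < r ->
    menger_alt m (AB_path m A B) k r (f k r) (g k r).

Definition weak_coarse_gallai (m : member) (f g : nat -> R -> R) : Prop :=
  forall (k : nat) (r : R) (A : pt (mspace m) -> Prop), 0 < r ->
    menger_alt m (A_path m A) k r (f k r) (g k r).

Definition remote_weak_coarse_menger (m : member) (f g : nat -> R -> R -> R) : Prop :=
  forall (k : nat) (r l : R) (A B : pt (mspace m) -> Prop), 0 < r -> 0 <= l ->
    menger_alt m (lAB_path m l A B) k r (f k r l) (g k r l).

From Pilot Require Import Defs.
From Stdlib Require Import Reals Lra.
Open Scope R_scope.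

(* Rescaling a space by [1/r] turns distance [r] into distance [1] and length
   [l] into [l/r], while the paths themselves (hence the classes of A-B-, A- and
   (l,A,B)-paths) are unchanged: continuity and rectifiability are invariant
   under scaling.  A unit-scale alternative in [(X, d/r)] is therefore a
   scale-[r] alternative in [(X, d)], with every radius multiplied back by [r]. *)

Lemma chord_sum_scale X c gamma t n :
  chord_sum (scale_space c X) gamma t n = c * chord_sum X gamma t n.
Proof. induction n as [|n IHn]; simpl; [ring | rewrite IHn; ring]. Qed.

Lemma curve_scale X c gamma : 0 < c ->
  curve (scale_space c X) gamma <-> curve X gamma.
Proof.
  intros Hc; split; intros Hgamma t Ht eps Heps.
  - destruct (Hgamma t Ht (c * eps)) as (delta & Hdelta & Hclose).
    { apply Rmult_lt_0_compat; assumption. }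
    exists delta; split; [exact Hdelta|].
    intros s Hs Hst. apply (Rmult_lt_reg_l c); [exact Hc | exact (Hclose s Hs Hst)].
  - destruct (Hgamma t Ht (eps / c)) as (delta & Hdelta & Hclose).
    { apply Rdiv_lt_0_compat; assumption. }
    exists delta; split; [exact Hdelta|].
    intros s Hs Hst. simpl. replace eps with (c * (eps / c)) by (field; lra).
    apply Rmult_lt_compat_l; [exact Hc | exact (Hclose s Hs Hst)].
Qed.

Lemma rectifiable_scale X c gamma : 0 < c ->
  rectifiable (scale_space c X) gamma <-> rectifiable X gamma.
Proof.
  intros Hc; split; intros [L HL].
  - exists (L / c). intros t n Ht.
    apply (Rmult_le_reg_l c); [exact Hc|].
    replace (c * (L / c)) with L by (field; lra).
    rewrite <- chord_sum_scale. exact (HL t n Ht).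
  - exists (c * L). intros t n Ht. rewrite chord_sum_scale.
    apply Rmult_le_compat_l; [lra | exact (HL t n Ht)].
Qed.

Lemma is_path_scale X c a b P : 0 < c ->
  is_path (LenSp (scale_space c X)) a b P <-> is_path (LenSp X) a b P.
Proof.
  intros Hc; simpl.
  split; intros (gamma & Hcurve & Hrect & Hpath); exists gamma;
    rewrite ?(curve_scale X c gamma Hc), ?(rectifiable_scale X c gamma Hc) in *;
    auto.
Qed.

Lemma AB_path_scale X c A B P : 0 < c ->
  AB_path (LenSp (scale_space c X)) A B P <-> AB_path (LenSp X) A B P.
Proof.
  intros Hc.
  split; intros (a & b & Ha & Hb & Hp); exists a, b;
    repeat split; try assumption; apply (is_path_scale X c a b P Hc); exact Hp.
Qed.

Lemma A_path_scale X c A P : 0 < c ->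
  A_path (LenSp (scale_space c X)) A P <-> A_path (LenSp X) A P.
Proof.
  intros Hc.
  split; intros (a & b & Ha & Hb & Hab & Hp); exists a, b;
    repeat split; try assumption; apply (is_path_scale X c a b P Hc); exact Hp.
Qed.

Lemma lAB_path_scale X c l A B P : 0 < c ->
  lAB_path (LenSp (scale_space c X)) (l * c) A B P <-> lAB_path (LenSp X) l A B P.
Proof.
  intros Hc; simpl.
  split; intros (a & b & Ha & Hb & Hl & Hp); exists a, b;
    repeat split; try assumption; try (apply (is_path_scale X c a b P Hc); exact Hp).
  - simpl in Hl. apply (Rmult_le_reg_r c); [exact Hc|].
    rewrite (Rmult_comm (Defs.dist X a b)). exact Hl.
  - simpl. rewrite (Rmult_comm c). apply Rmult_le_compat_r; [lra | exact Hl].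
Qed.

Lemma dist_ge_unscale X c P Q r : 0 < c ->
  dist_ge (scale_space (/ c) X) P Q r -> dist_ge X P Q (r * c).
Proof.
  intros Hc HPQ x y Hx Hy.
  replace (Defs.dist X x y) with (/ c * Defs.dist X x y * c) by (field; lra).
  apply Rmult_le_compat_r; [lra | exact (HPQ x y Hx Hy)].
Qed.

Lemma centered_unscale X c alpha beta Z : 0 < c ->
  centered (scale_space (/ c) X) alpha beta Z -> centered X alpha (beta * c) Z.
Proof.
  intros Hc (n & center & rad & Hn & Hrad & Hcover).
  exists n, center, (fun i => rad i * c); split; [exact Hn|]; split.
  - intros i Hi. apply Rmult_le_compat_r; [lra | exact (Hrad i Hi)].
  - intros z Hz. destruct (Hcover z Hz) as (i & Hi & Hdist).
    exists i; split; [exact Hi|].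
    replace (Defs.dist X (center i) z)
      with (/ c * Defs.dist X (center i) z * c) by (field; lra).
    apply Rmult_le_compat_r; [lra | exact Hdist].
Qed.

Lemma menger_alt_unscale X c (cls' cls : (pt X -> Prop) -> Prop) k alpha beta :
  0 < c -> (forall P, cls' P <-> cls P) ->
  menger_alt (LenSp (scale_space (/ c) X)) cls' k 1 alpha beta ->
  menger_alt (LenSp X) cls k c alpha (beta * c).
Proof.
  intros Hc Hcls [(P & HP & Hfar) | (Z & HZ & Hhit)].
  - left. exists P; split.
    + intros i Hi. apply Hcls, HP, Hi.
    + intros i j Hi Hj Hij. rewrite <- (Rmult_1_l c).
      exact (dist_ge_unscale X c _ _ 1 Hc (Hfar i j Hi Hj Hij)).
  - right. exists Z; split.
    + exact (centered_unscale X c alpha beta Z Hc HZ).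
    + intros Q HQ. apply Hhit, Hcls, HQ.
Qed.

Lemma scaling_closed_inv F X r : scaling_closed F -> F (LenSp X) -> 0 < r ->
  F (LenSp (scale_space (/ r) X)).
Proof.
  intros HF HX Hr. exact (HF (LenSp X) (/ r) HX (Rinv_0_lt_compat r Hr)).
Qed.

Theorem lemma9p5 (F : member -> Prop) :
  (forall m, F m -> valid_member m) ->
  scaling_closed F ->
  (forall f g : nat -> R -> R,
     (forall m, F m -> weak_coarse_menger m f g) ->
     forall X, F (LenSp X) ->
       weak_coarse_menger (LenSp X) (fun k _ => f k 1) (fun k r => g k 1 * r)) /\
  (forall f g : nat -> R -> R,
     (forall m, F m -> weak_coarse_gallai m f g) ->
     forall X, F (LenSp X) ->
       weak_coarse_gallai (LenSp X) (fun k _ => f k 1) (fun k r => g k 1 * r)) /\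
  (forall f g : nat -> R -> R -> R,
     (forall m, F m -> remote_weak_coarse_menger m f g) ->
     forall X, F (LenSp X) ->
       remote_weak_coarse_menger (LenSp X)
         (fun k r l => f k 1 (l / r)) (fun k r l => g k 1 (l / r) * r)).
Proof.
  intros _ Hclosed. split; [|split].
  - intros f g Hmenger X HX k r A B Hr.
    apply (menger_alt_unscale X r _ _ k _ _ Hr (fun P => AB_path_scale X (/ r) A B P
             (Rinv_0_lt_compat r Hr))).
    exact (Hmenger _ (scaling_closed_inv F X r Hclosed HX Hr) k 1 A B Rlt_0_1).
  - intros f g Hgallai X HX k r A Hr.
    apply (menger_alt_unscale X r _ _ k _ _ Hr (fun P => A_path_scale X (/ r) A P
             (Rinv_0_lt_compat r Hr))).
    exact (Hgallai _ (scaling_closed_inv F X r Hclosed HX Hr) k 1 A Rlt_0_1).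
  - intros f g Hremote X HX k r l A B Hr Hl.
    apply (menger_alt_unscale X r _ _ k _ _ Hr (fun P => lAB_path_scale X (/ r) l A B P
             (Rinv_0_lt_compat r Hr))).
    apply (Hremote _ (scaling_closed_inv F X r Hclosed HX Hr) k 1 (l / r) A B Rlt_0_1).
    apply Rle_mult_inv_pos; assumption.
Qed.
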